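(* $\mathcal{M}_{3,3}\subseteq\overline{\operatorname{RBM}_{3,2}}$, the topological closure of $\operatorname{RBM}_{3,2}$ in $\Delta_7$.
   Context: A distribution of three binary random variables is a $2\times2\times2$ tensor $p=(p_{ijk})_{i,j,k\in\{0,1\}}$ with nonnegative entries summing to $1$; the set of these is the simplex $\Delta_7$. For $a,b,c\in\mathbb{R}^2_{\ge0}$, $a\otimes b\otimes c$ is the tensor with entries $a_ib_jc_k$. $\mathcal{M}_{3,3}$ is the set of $p\in\Delta_7$ that are a sum of three tensors of the form $a\otimes b\otimes c$ with $a,b,c\in\mathbb{R}^2_{\ge0}$. $\operatorname{RBM}_{3,2}$ is the set of $p\in\Delta_7$ of the form $p=(a_1\otimes b_1\otimes c_1+d_1\otimes e_1\otimes f_1)*(a_2\otimes b_2\otimes c_2+d_2\otimes e_2\otimes f_2)$ with all vectors in $\mathbb{R}^2_{\ge0}$, where $*$ is the entrywise (Hadamard) product. *)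

From Stdlib Require Import Reals.
Open Scope R_scope.

(* A 2x2x2 tensor, indices in {0,1} represented by bool (false = 0, true = 1). *)
Definition tensor := bool -> bool -> bool -> R.
Definition vec2 := bool -> R.

Definition nonneg2 (a : vec2) : Prop := forall i, 0 <= a i.

Definition sumb (f : bool -> R) : R := f false + f true.

Definition outer3 (a b c : vec2) : tensor := fun i j k => a i * b j * c k.

Definition tadd (p q : tensor) : tensor := fun i j k => p i j k + q i j k.
Definition hadamard (p q : tensor) : tensor := fun i j k => p i j k * q i j k.

Definition in_simplex (p : tensor) : Prop :=
  (forall i j k, 0 <= p i j k) /\
  sumb (fun i => sumb (fun j => sumb (fun k => p i j k))) = 1.

Definition M33 (p : tensor) : Prop :=
  in_simplex p /\
  exists a1 b1 c1 a2 b2 c2 a3 b3 c3 : vec2,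
    nonneg2 a1 /\ nonneg2 b1 /\ nonneg2 c1 /\
    nonneg2 a2 /\ nonneg2 b2 /\ nonneg2 c2 /\
    nonneg2 a3 /\ nonneg2 b3 /\ nonneg2 c3 /\
    p = tadd (tadd (outer3 a1 b1 c1) (outer3 a2 b2 c2)) (outer3 a3 b3 c3).

Definition RBM32 (p : tensor) : Prop :=
  in_simplex p /\
  exists a1 b1 c1 d1 e1 f1 a2 b2 c2 d2 e2 f2 : vec2,
    nonneg2 a1 /\ nonneg2 b1 /\ nonneg2 c1 /\
    nonneg2 d1 /\ nonneg2 e1 /\ nonneg2 f1 /\
    nonneg2 a2 /\ nonneg2 b2 /\ nonneg2 c2 /\
    nonneg2 d2 /\ nonneg2 e2 /\ nonneg2 f2 /\
    p = hadamard (tadd (outer3 a1 b1 c1) (outer3 d1 e1 f1))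
                 (tadd (outer3 a2 b2 c2) (outer3 d2 e2 f2)).

(* p lies in the topological closure of S (with respect to the Euclidean
   topology on R^8, expressed with the equivalent sup-norm). *)
Definition in_closure (S : tensor -> Prop) (p : tensor) : Prop :=
  forall eps, 0 < eps ->
    exists q, S q /\ forall i j k, Rabs (p i j k - q i j k) < eps.

(* Perturbing the three rank-one terms, it suffices to treat
   p = sum_m k_m (1,x_m) (x) (1,y_m) (x) (1,z_m) with k_m >= 0 and x_m, y_m, z_m > 0.
   The determinant of the i-th 2x2 slice of p along the first axis is
   sum_(m<n) k_m k_n x_m^i x_n^i (y_n - y_m)(z_n - z_m), and similarly for the other axes.
   Ordering the summands by x and inverting the y- and z-coordinates if necessary, either
   one of these sums has all its terms of one sign, or a positive combination of a slice
   determinant along y and one along z is nonnegative; in both cases some axis has two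
   slice determinants of the same sign.
   A nonnegative tensor with this property is e0 (x) B + e1 (x) D + u (x) v (x) w with
   B, D nonnegative of rank one and u, v, w >= 0, and once u, v, w are made positive such a
   tensor is exactly a product of two mixtures of two product tensors.  Normalizing the
   approximants gives points of RBM_{3,2}. *)

From Stdlib Require Import Reals Lra Psatz FunctionalExtensionality.
Open Scope R_scope.

Ltac tensor_ext := extensionality i; extensionality j; extensionality l.

Definition close (eps : R) (p q : tensor) : Prop :=
  forall i j k, Rabs (p i j k - q i j k) < eps.

Definition positive2 (a : vec2) : Prop := forall i, 0 < a i.

Definition sumset (S T : tensor -> Prop) (r : tensor) : Prop :=
  exists p q, S p /\ T q /\ r = tadd p q.

Lemma Rabs_sub_triang (a b c : R) : Rabs (a - c) <= Rabs (a - b) + Rabs (b - c).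
Proof. replace (a - c) with ((a - b) + (b - c)) by ring. apply Rabs_triang. Qed.

Lemma in_closure_self (S : tensor -> Prop) (p : tensor) : S p -> in_closure S p.
Proof.
  intros Sp eps Heps. exists p. split; [exact Sp|].
  intros i j k. rewrite Rminus_diag, Rabs_R0. exact Heps.
Qed.

Lemma in_closure_mono (S T : tensor -> Prop) (p : tensor) :
  (forall q, S q -> T q) -> in_closure S p -> in_closure T p.
Proof.
  intros ST Hp eps Heps. destruct (Hp eps Heps) as (q & Sq & Hq).
  exists q. split; auto.
Qed.

Lemma in_closure_trans (S T : tensor -> Prop) (p : tensor) :
  (forall q, S q -> in_closure T q) -> in_closure S p -> in_closure T p.
Proof.
  intros ST Hp eps Heps.
  destruct (Hp (eps / 2)) as (q & Sq & Hq); [lra|].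
  destruct (ST q Sq (eps / 2)) as (r & Tr & Hr); [lra|].
  exists r. split; [exact Tr|]. intros i j k.
  pose proof (Rabs_sub_triang (p i j k) (q i j k) (r i j k)).
  specialize (Hq i j k). specialize (Hr i j k). lra.
Qed.

Lemma in_closure_tadd (S T : tensor -> Prop) (p q : tensor) :
  in_closure S p -> in_closure T q -> in_closure (sumset S T) (tadd p q).
Proof.
  intros Hp Hq eps Heps.
  destruct (Hp (eps / 2)) as (p' & Sp' & Hp'); [lra|].
  destruct (Hq (eps / 2)) as (q' & Tq' & Hq'); [lra|].
  exists (tadd p' q'). split; [exists p', q'; auto|]. intros i j k. unfold tadd.
  replace (p i j k + q i j k - (p' i j k + q' i j k))
    with ((p i j k - p' i j k) + (q i j k - q' i j k)) by ring.
  pose proof (Rabs_triang (p i j k - p' i j k) (q i j k - q' i j k)).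
  specialize (Hp' i j k). specialize (Hq' i j k). lra.
Qed.

Lemma in_closure_map (S : tensor -> Prop) (f : tensor -> tensor) (p : tensor) :
  (forall q, S q -> S (f q)) -> (forall eps q r, close eps q r -> close eps (f q) (f r)) ->
  in_closure S p -> in_closure S (f p).
Proof.
  intros Sf Hf Hp eps Heps. destruct (Hp eps Heps) as (q & Sq & Hq).
  exists (f q). split; [auto|]. exact (Hf eps p q Hq).
Qed.

Definition positive_rank1 (r : tensor) : Prop :=
  exists a b c, positive2 a /\ positive2 b /\ positive2 c /\ r = outer3 a b c.

Lemma perturb_cube_bound (a b c K eta : R) :
  0 <= a <= K -> 0 <= b <= K -> 0 <= c <= K -> 0 <= eta <= 1 ->
  0 <= (a + eta) * (b + eta) * (c + eta) - a * b * c <= eta * (K + 1) ^ 3.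
Proof.
  intros Ha Hb Hc He.
  assert (E : (a + eta) * (b + eta) * (c + eta) - a * b * c
              = eta * (a * b + a * c + b * c) + eta ^ 2 * (a + b + c) + eta ^ 3) by ring.
  rewrite E.
  assert (a * b <= K * K) by nra. assert (a * c <= K * K) by nra. assert (b * c <= K * K) by nra.
  assert (0 <= eta ^ 2 <= eta) by (simpl; nra). assert (0 <= eta ^ 3 <= eta) by (simpl; nra).
  assert (0 <= a * b + a * c + b * c) by nra.
  split; [nra|].
  assert (eta * (a * b + a * c + b * c) <= eta * (3 * (K * K))) by nra.
  assert (eta ^ 2 * (a + b + c) <= eta * (3 * K)) by nra.
  assert (0 <= eta * K ^ 3) by (apply Rmult_le_pos; [lra | apply pow_le; lra]).
  replace (eta * (K + 1) ^ 3)
    with (eta * K ^ 3 + eta * (3 * (K * K)) + eta * (3 * K) + eta) by ring.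
  lra.
Qed.

Lemma nonneg2_le_sum (v : vec2) (i : bool) : nonneg2 v -> 0 <= v i <= v false + v true.
Proof. intros Hv. pose proof (Hv false). pose proof (Hv true). destruct i; lra. Qed.

Lemma rank1_in_closure (a b c : vec2) :
  nonneg2 a -> nonneg2 b -> nonneg2 c -> in_closure positive_rank1 (outer3 a b c).
Proof.
  intros Ha Hb Hc eps Heps.
  set (K := (a false + a true) + (b false + b true) + (c false + c true)).
  assert (Hbound : forall v i, nonneg2 v -> v false + v true <= K -> 0 <= v i <= K)
    by (intros v i Hv HvK; pose proof (nonneg2_le_sum v i Hv); lra).
  pose proof (nonneg2_le_sum a false Ha). pose proof (nonneg2_le_sum b false Hb).
  pose proof (nonneg2_le_sum c false Hc).
  assert (HK0 : 0 <= K) by (unfold K; lra).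
  assert (HK : 0 < (K + 1) ^ 3) by (apply pow_lt; lra).
  set (eta := Rmin 1 (eps / (2 * (K + 1) ^ 3))).
  assert (Heta : 0 < eta <= 1)
    by (split; [apply Rmin_glb_lt; [lra | apply Rdiv_lt_0_compat; lra] | apply Rmin_l]).
  assert (Heta_eps : eta * (K + 1) ^ 3 < eps).
  { apply Rle_lt_trans with (eps / (2 * (K + 1) ^ 3) * (K + 1) ^ 3).
    - apply Rmult_le_compat_r; [lra | apply Rmin_r].
    - replace (eps / (2 * (K + 1) ^ 3) * (K + 1) ^ 3) with (eps / 2) by (field; lra). lra. }
  exists (outer3 (fun i => a i + eta) (fun j => b j + eta) (fun k => c k + eta)). split.
  - exists (fun i => a i + eta), (fun j => b j + eta), (fun k => c k + eta).
    repeat split; intro i; [pose proof (Ha i) | pose proof (Hb i) | pose proof (Hc i)]; lra.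
  - intros i j k. unfold outer3.
    destruct (perturb_cube_bound (a i) (b j) (c k) K eta) as [Hlo Hhi];
      try (apply Hbound; auto; unfold K; lra); try lra.
    rewrite Rabs_minus_sym, Rabs_right; lra.
Qed.

Definition RBM (r : tensor) : Prop :=
  exists a1 b1 c1 d1 e1 f1 a2 b2 c2 d2 e2 f2 : vec2,
    nonneg2 a1 /\ nonneg2 b1 /\ nonneg2 c1 /\
    nonneg2 d1 /\ nonneg2 e1 /\ nonneg2 f1 /\
    nonneg2 a2 /\ nonneg2 b2 /\ nonneg2 c2 /\
    nonneg2 d2 /\ nonneg2 e2 /\ nonneg2 f2 /\
    r = hadamard (tadd (outer3 a1 b1 c1) (outer3 d1 e1 f1))
                 (tadd (outer3 a2 b2 c2) (outer3 d2 e2 f2)).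

Definition e0 : vec2 := fun i => if i then 0 else 1.
Definition e1 : vec2 := fun i => if i then 1 else 0.

Lemma nonneg2_e0 : nonneg2 e0. Proof. intros []; simpl; lra. Qed.
Lemma nonneg2_e1 : nonneg2 e1. Proof. intros []; simpl; lra. Qed.

(* The second factor is (0, 1/U_1) (x) (d/V) (x) (f/W) + 1 (x) 1 (x) 1; its first summand
   vanishes on e0 (x) b (x) c and turns U (x) V (x) W into e1 (x) d (x) f. *)
Lemma RBM_exact (b c d f U V W : vec2) :
  nonneg2 b -> nonneg2 c -> nonneg2 d -> nonneg2 f ->
  positive2 U -> positive2 V -> positive2 W ->
  RBM (tadd (tadd (outer3 e0 b c) (outer3 e1 d f)) (outer3 U V W)).
Proof.
  intros Hb Hc Hd Hf HU HV HW.
  exists e0, b, c, U, V, W,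
    (fun i : bool => if i then / U true else 0), (fun j => d j / V j), (fun l => f l / W l),
    (fun _ : bool => 1), (fun _ : bool => 1), (fun _ : bool => 1).
  assert (HUinv : 0 < / U true) by (apply Rinv_0_lt_compat, HU).
  assert (Hdiv : forall g h : vec2, nonneg2 g -> positive2 h -> nonneg2 (fun j => g j / h j))
    by (intros g h Hg Hh j; apply Rmult_le_pos; [apply Hg | left; apply Rinv_0_lt_compat, Hh]).
  split; [apply nonneg2_e0|]. split; [exact Hb|]. split; [exact Hc|].
  split; [intro i; left; apply HU|]. split; [intro i; left; apply HV|].
  split; [intro i; left; apply HW|]. split; [intros []; lra|].
  split; [apply Hdiv; auto|]. split; [apply Hdiv; auto|].
  split; [intro; lra|]. split; [intro; lra|]. split; [intro; lra|].
  tensor_ext.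
  pose proof (HU true). pose proof (HV j). pose proof (HW l).
  unfold hadamard, tadd, outer3, e0, e1. destruct i; field; lra.
Qed.

Definition det2 (M : bool -> bool -> R) : R :=
  M false false * M true true - M false true * M true false.

Definition mnonneg (M : bool -> bool -> R) : Prop := forall j l, 0 <= M j l.

Lemma rank1_of_det2_eq0 (M : bool -> bool -> R) :
  mnonneg M -> det2 M = 0 ->
  exists b c, nonneg2 b /\ nonneg2 c /\ forall j l, M j l = b j * c l.
Proof.
  unfold det2. intros HM Hdet.
  pose proof (HM false false). pose proof (HM false true).
  pose proof (HM true false). pose proof (HM true true).
  destruct (Rlt_le_dec 0 (M false false)) as [Hpos | Hzero].
  - exists (fun j : bool => if j then M true false / M false false else 1), (M false).
    split; [intros []; [apply Rmult_le_pos; [lra | left; apply Rinv_0_lt_compat; lra] | lra]|].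
    split; [intro; apply HM|].
    intros [] []; simpl; [| field; lra | ring | ring].
    apply (Rmult_eq_reg_l (M false false)); [| lra]. field_simplify; lra.
  - assert (M false true = 0 \/ M true false = 0) as [Hrow | Hcol] by nra.
    + exists e1, (M true). split; [apply nonneg2_e1|]. split; [intro; apply HM|].
      intros [] []; unfold e1; lra.
    + exists (fun j : bool => M j true), e1. split; [intro; apply HM|]. split; [apply nonneg2_e1|].
      intros [] []; unfold e1; lra.
Qed.

Lemma det2_nonneg_split (M : bool -> bool -> R) :
  mnonneg M -> 0 <= det2 M ->
  exists s b c, 0 <= s /\ nonneg2 b /\ nonneg2 c /\
    forall j l, M j l = s * (e0 j * e0 l) + b j * c l.
Proof.
  intros HM Hdet.
  set (s := if Rlt_dec 0 (M true true) then det2 M / M true true else 0).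
  set (M' := fun j l : bool => if j then M j l else if l then M j l else M j l - s).
  assert (Hs : 0 <= s <= M false false /\ det2 M' = 0).
  { unfold s, M', det2 in *. pose proof (HM false true). pose proof (HM true false).
    destruct (Rlt_dec 0 (M true true)) as [Hpos | Hzero]; simpl.
    - split; [split|].
      + apply Rmult_le_pos; [lra | left; apply Rinv_0_lt_compat; lra].
      + apply (Rmult_le_reg_r (M true true)); [lra|]. field_simplify; nra.
      + unfold s; field; lra.
    - pose proof (HM true true). pose proof (HM false false).
      assert (M true true = 0) by lra. nra. }
  destruct Hs as [Hs HM'].
  destruct (rank1_of_det2_eq0 M') as (b & c & Hb & Hc & Hbc); [|exact HM'|].
  - intros [] []; unfold M'; try apply HM; lra.
  - exists s, b, c. split; [lra|]. split; [exact Hb|]. split; [exact Hc|].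
    intros j l. rewrite <- Hbc. unfold M', e0. destruct j, l; ring.
Qed.

Definition corner (sigma : bool) : vec2 := if sigma then e1 else e0.

Lemma det2_split_corner (sigma : bool) (M : bool -> bool -> R) :
  mnonneg M -> (if sigma then det2 M <= 0 else 0 <= det2 M) ->
  exists s b c, 0 <= s /\ nonneg2 b /\ nonneg2 c /\
    forall j l, M j l = s * (e0 j * corner sigma l) + b j * c l.
Proof.
  destruct sigma; [|apply det2_nonneg_split].
  intros HM Hdet.
  destruct (det2_nonneg_split (fun j l => M j (negb l))) as (s & b & c & Hs & Hb & Hc & Hsplit).
  - intros j l; apply HM.
  - unfold det2 in *; simpl; lra.
  - exists s, b, (fun l => c (negb l)). split; [exact Hs|]. split; [exact Hb|].
    split; [intro; apply Hc|].
    intros j l. rewrite <- (Bool.negb_involutive l) at 1. rewrite Hsplit.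
    destruct l; reflexivity.
Qed.

Definition tnonneg (P : tensor) : Prop := forall i j k, 0 <= P i j k.

Definition slices_agree (P : tensor) : Prop := 0 <= det2 (P false) * det2 (P true).

Lemma slices_agree_decomp (P : tensor) :
  tnonneg P -> slices_agree P ->
  exists b c d f u v w, nonneg2 b /\ nonneg2 c /\ nonneg2 d /\ nonneg2 f /\
    nonneg2 u /\ nonneg2 v /\ nonneg2 w /\
    P = tadd (tadd (outer3 e0 b c) (outer3 e1 d f)) (outer3 u v w).
Proof.
  intros HP Hagree.
  assert (Hsigma : exists sigma : bool, forall i,
             if sigma then det2 (P i) <= 0 else 0 <= det2 (P i)).
  { unfold slices_agree in Hagree.
    destruct (Rle_dec 0 (det2 (P false))), (Rle_dec 0 (det2 (P true))).
    all: first [exists false; intros []; lra | exists true; intros []; nra]. }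
  destruct Hsigma as [sigma Hsigma].
  destruct (det2_split_corner sigma (P false)) as (s0 & b & c & Hs0 & Hb & Hc & Hsplit0);
    [intros j l; apply HP | apply Hsigma |].
  destruct (det2_split_corner sigma (P true)) as (s1 & d & f & Hs1 & Hd & Hf & Hsplit1);
    [intros j l; apply HP | apply Hsigma |].
  exists b, c, d, f, (fun i : bool => if i then s1 else s0), e0, (corner sigma).
  repeat split; auto; try apply nonneg2_e0.
  - intros []; lra.
  - destruct sigma; [apply nonneg2_e1 | apply nonneg2_e0].
  - tensor_ext.
    unfold tadd, outer3. destruct i; [rewrite Hsplit1 | rewrite Hsplit0]; unfold e0, e1; ring.
Qed.

Lemma slices_agree_in_closure_RBM (P : tensor) :
  tnonneg P -> slices_agree P -> in_closure RBM P.
Proof.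
  intros HP Hagree.
  destruct (slices_agree_decomp P HP Hagree)
    as (b & c & d & f & u & v & w & Hb & Hc & Hd & Hf & Hu & Hv & Hw & ->).
  apply in_closure_mono with
    (sumset (eq (tadd (outer3 e0 b c) (outer3 e1 d f))) positive_rank1).
  - intros q (Q & r & <- & (U & V & W & HU & HV & HW & ->) & ->). apply RBM_exact; auto.
  - apply in_closure_tadd; [apply in_closure_self; reflexivity | apply rank1_in_closure; auto].
Qed.

Definition swap_xy (P : tensor) : tensor := fun i j l => P j i l.
Definition swap_xz (P : tensor) : tensor := fun i j l => P l j i.

Definition slices_agree_some_axis (P : tensor) : Prop :=
  slices_agree P \/ slices_agree (swap_xy P) \/ slices_agree (swap_xz P).

Lemma RBM_swap_xy (r : tensor) : RBM r -> RBM (swap_xy r).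
Proof.
  intros (a1 & b1 & c1 & d1 & e1 & f1 & a2 & b2 & c2 & d2 & e2 & f2 & H1 & H2 & H3 & H4 & H5 & H6
          & H7 & H8 & H9 & H10 & H11 & H12 & ->).
  exists b1, a1, c1, e1, d1, f1, b2, a2, c2, e2, d2, f2. repeat split; auto.
  tensor_ext.
  unfold swap_xy, hadamard, tadd, outer3. ring.
Qed.

Lemma RBM_swap_xz (r : tensor) : RBM r -> RBM (swap_xz r).
Proof.
  intros (a1 & b1 & c1 & d1 & e1 & f1 & a2 & b2 & c2 & d2 & e2 & f2 & H1 & H2 & H3 & H4 & H5 & H6
          & H7 & H8 & H9 & H10 & H11 & H12 & ->).
  exists c1, b1, a1, f1, e1, d1, c2, b2, a2, f2, e2, d2. repeat split; auto.
  tensor_ext.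
  unfold swap_xz, hadamard, tadd, outer3. ring.
Qed.

Lemma some_axis_in_closure_RBM (P : tensor) :
  tnonneg P -> slices_agree_some_axis P -> in_closure RBM P.
Proof.
  intros HP [Hx | [Hy | Hz]].
  - apply slices_agree_in_closure_RBM; auto.
  - change (in_closure RBM (swap_xy (swap_xy P))).
    apply in_closure_map; [apply RBM_swap_xy | intros eps q r Hqr i j l; apply Hqr |].
    apply slices_agree_in_closure_RBM; [intros i j l; apply HP | exact Hy].
  - change (in_closure RBM (swap_xz (swap_xz P))).
    apply in_closure_map; [apply RBM_swap_xz | intros eps q r Hqr i j l; apply Hqr |].
    apply slices_agree_in_closure_RBM; [intros i j l; apply HP | exact Hz].
Qed.

Record summand : Type := Summand { wt : R; cx : R; cy : R; cz : R }.

Definition homog (x : R) : vec2 := fun b => if b then x else 1.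

Definition term (c : summand) : tensor :=
  outer3 (fun i => wt c * homog (cx c) i) (homog (cy c)) (homog (cz c)).

Definition mix3 (c1 c2 c3 : summand) : tensor := tadd (tadd (term c1) (term c2)) (term c3).

Definition positive_summand (c : summand) : Prop := 0 <= wt c /\ 0 < cx c /\ 0 < cy c /\ 0 < cz c.

Definition dyz (c d : summand) : R := (cy d - cy c) * (cz d - cz c).

Definition pair_x (c d : summand) (i : bool) : R :=
  wt c * wt d * (homog (cx c) i * homog (cx d) i) * dyz c d.

Lemma homog_pos (x : R) (i : bool) : 0 < x -> 0 < homog x i.
Proof. destruct i; simpl; lra. Qed.

Lemma det2_mix3 (c1 c2 c3 : summand) (i : bool) :
  det2 (mix3 c1 c2 c3 i) = pair_x c1 c2 i + pair_x c1 c3 i + pair_x c2 c3 i.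
Proof. unfold det2, mix3, tadd, term, outer3, pair_x, dyz, homog. destruct i; ring. Qed.

Lemma slices_agree_of_nonneg (P : tensor) : (forall i, 0 <= det2 (P i)) -> slices_agree P.
Proof. intros H. apply Rmult_le_pos; apply H. Qed.

Lemma pair_x_nonneg (c d : summand) (i : bool) :
  positive_summand c -> positive_summand d -> 0 <= dyz c d -> 0 <= pair_x c d i.
Proof.
  intros (Hc & Hcx & _) (Hd & Hdx & _) Hdyz. unfold pair_x.
  pose proof (homog_pos _ i Hcx). pose proof (homog_pos _ i Hdx).
  apply Rmult_le_pos; [repeat apply Rmult_le_pos; lra | exact Hdyz].
Qed.

Lemma slices_agree_mix3 (c1 c2 c3 : summand) :
  positive_summand c1 -> positive_summand c2 -> positive_summand c3 ->
  0 <= dyz c1 c2 -> 0 <= dyz c1 c3 -> 0 <= dyz c2 c3 -> slices_agree (mix3 c1 c2 c3).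
Proof.
  intros H1 H2 H3 H12 H13 H23. apply slices_agree_of_nonneg. intro i. rewrite det2_mix3.
  pose proof (pair_x_nonneg c1 c2 i H1 H2 H12). pose proof (pair_x_nonneg c1 c3 i H1 H3 H13).
  pose proof (pair_x_nonneg c2 c3 i H2 H3 H23). lra.
Qed.

Definition swap_yz (P : tensor) : tensor := fun i j l => P i l j.

Definition sm_swap_xy (c : summand) : summand := Summand (wt c) (cy c) (cx c) (cz c).
Definition sm_swap_xz (c : summand) : summand := Summand (wt c) (cz c) (cy c) (cx c).
Definition sm_swap_yz (c : summand) : summand := Summand (wt c) (cx c) (cz c) (cy c).

Lemma swap_xy_mix3 (c1 c2 c3 : summand) :
  swap_xy (mix3 c1 c2 c3) = mix3 (sm_swap_xy c1) (sm_swap_xy c2) (sm_swap_xy c3).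
Proof. tensor_ext. unfold swap_xy, mix3, tadd, term, outer3; simpl. ring. Qed.

Lemma swap_xz_mix3 (c1 c2 c3 : summand) :
  swap_xz (mix3 c1 c2 c3) = mix3 (sm_swap_xz c1) (sm_swap_xz c2) (sm_swap_xz c3).
Proof. tensor_ext. unfold swap_xz, mix3, tadd, term, outer3; simpl. ring. Qed.

Lemma swap_yz_mix3 (c1 c2 c3 : summand) :
  swap_yz (mix3 c1 c2 c3) = mix3 (sm_swap_yz c1) (sm_swap_yz c2) (sm_swap_yz c3).
Proof. tensor_ext. unfold swap_yz, mix3, tadd, term, outer3; simpl. ring. Qed.

Lemma some_axis_of_swap_yz (P : tensor) :
  slices_agree_some_axis (swap_yz P) -> slices_agree_some_axis P.
Proof.
  unfold slices_agree_some_axis, slices_agree, swap_xy, swap_xz, swap_yz, det2.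
  intros [H | [H | H]]; [left | right; right | right; left]; lra.
Qed.

Definition flip_y (P : tensor) : tensor := fun i j l => P i (negb j) l.
Definition flip_z (P : tensor) : tensor := fun i j l => P i j (negb l).

(* Reversing the coordinates of (1, y) gives y (1, 1/y). *)
Definition sm_flip_y (c : summand) : summand := Summand (wt c * cy c) (cx c) (/ cy c) (cz c).
Definition sm_flip_z (c : summand) : summand := Summand (wt c * cz c) (cx c) (cy c) (/ cz c).

Lemma some_axis_flip_y (P : tensor) :
  slices_agree_some_axis P -> slices_agree_some_axis (flip_y P).
Proof.
  unfold slices_agree_some_axis, slices_agree, swap_xy, swap_xz, flip_y, det2; simpl.
  intros [H | [H | H]]; [left | right; left | right; right]; lra.
Qed.

Lemma some_axis_flip_z (P : tensor) :
  slices_agree_some_axis P -> slices_agree_some_axis (flip_z P).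
Proof.
  unfold slices_agree_some_axis, slices_agree, swap_xy, swap_xz, flip_z, det2; simpl.
  intros [H | [H | H]]; [left | right; left | right; right]; lra.
Qed.

Lemma flip_y_mix3 (c1 c2 c3 : summand) :
  cy c1 <> 0 -> cy c2 <> 0 -> cy c3 <> 0 ->
  flip_y (mix3 (sm_flip_y c1) (sm_flip_y c2) (sm_flip_y c3)) = mix3 c1 c2 c3.
Proof.
  intros. tensor_ext. unfold flip_y, mix3, tadd, term, outer3, homog; simpl.
  destruct j; simpl; field; auto.
Qed.

Lemma flip_z_mix3 (c1 c2 c3 : summand) :
  cz c1 <> 0 -> cz c2 <> 0 -> cz c3 <> 0 ->
  flip_z (mix3 (sm_flip_z c1) (sm_flip_z c2) (sm_flip_z c3)) = mix3 c1 c2 c3.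
Proof.
  intros. tensor_ext. unfold flip_z, mix3, tadd, term, outer3, homog; simpl.
  destruct l; simpl; field; auto.
Qed.

Lemma positive_summand_flip_y (c : summand) : positive_summand c -> positive_summand (sm_flip_y c).
Proof.
  intros (Hw & Hx & Hy & Hz). unfold sm_flip_y, positive_summand; simpl.
  repeat split; try apply Rmult_le_pos; try apply Rinv_0_lt_compat; lra.
Qed.

Lemma positive_summand_flip_z (c : summand) : positive_summand c -> positive_summand (sm_flip_z c).
Proof.
  intros (Hw & Hx & Hy & Hz). unfold sm_flip_z, positive_summand; simpl.
  repeat split; try apply Rmult_le_pos; try apply Rinv_0_lt_compat; lra.
Qed.

Lemma homog_diff_le_l (a b c : R) (j : bool) :
  0 < a <= b -> b <= c -> homog a j * (c - b) <= homog b j * (c - a).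
Proof. intros. destruct j; simpl; nra. Qed.

Lemma homog_diff_le_r (a b c : R) (j : bool) :
  0 < a <= b -> b <= c -> homog c j * (b - a) <= homog b j * (c - a).
Proof. intros. destruct j; simpl; nra. Qed.

Section Mixed.
Variables c1 c2 c3 : summand.
Hypotheses (H1 : positive_summand c1) (H2 : positive_summand c2) (H3 : positive_summand c3).
Hypotheses (Hx : cx c1 <= cx c2 <= cx c3) (Hy : cy c1 <= cy c3 <= cy c2)
  (Hz : cz c2 <= cz c1 <= cz c3).

Let Dy (j : bool) : R := det2 (swap_xy (mix3 c1 c2 c3) j).
Let Dz (l : bool) : R := det2 (swap_xz (mix3 c1 c2 c3) l).

Lemma mixed_certificate (j l : bool) :
  0 <= homog (cz c1) l * homog (cz c2) l * (cy c2 - cy c1) * Dy j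
       + homog (cy c1) j * homog (cy c2) j * (cz c1 - cz c2) * Dz l.
Proof.
  unfold Dy, Dz. rewrite swap_xy_mix3, swap_xz_mix3, !det2_mix3.
  unfold pair_x, dyz.
  destruct c1 as [k1 x1 y1 z1], c2 as [k2 x2 y2 z2], c3 as [k3 x3 y3 z3].
  unfold positive_summand in *; simpl in *.
  pose proof (homog_pos y1 j). pose proof (homog_pos y2 j). pose proof (homog_pos y3 j).
  pose proof (homog_pos z1 l). pose proof (homog_pos z2 l). pose proof (homog_pos z3 l).
  set (Y12 := homog y1 j * homog y2 j). set (Y13 := homog y1 j * homog y3 j).
  set (Y23 := homog y2 j * homog y3 j). set (Z12 := homog z1 l * homog z2 l).
  set (Z13 := homog z1 l * homog z3 l). set (Z23 := homog z2 l * homog z3 l).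
  assert (Hyy : 0 <= Y12 * (y2 - y3) <= Y23 * (y2 - y1)).
  { unfold Y12, Y23. split; [repeat apply Rmult_le_pos; lra|].
    pose proof (homog_diff_le_l y1 y3 y2 j ltac:(lra) ltac:(lra)). nra. }
  assert (Hzz : 0 <= Z23 * (z1 - z2) <= Z12 * (z3 - z2)).
  { unfold Z12, Z23. split; [repeat apply Rmult_le_pos; lra|].
    pose proof (homog_diff_le_r z2 z1 z3 l ltac:(lra) ltac:(lra)). nra. }
  (* In this combination the contributions of the pair (1,2) cancel. *)
  assert (Hpair13 : 0 <= k1 * k3 * (x3 - x1) *
            (Z12 * (y2 - y1) * Y13 * (z3 - z1) + Y12 * (z1 - z2) * Z13 * (y3 - y1))).
  { unfold Y12, Y13, Z12, Z13. repeat apply Rmult_le_pos; try lra.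
    apply Rplus_le_le_0_compat; repeat apply Rmult_le_pos; lra. }
  assert (Hpair23 : 0 <= k2 * k3 * (x3 - x2) *
            (Z12 * (y2 - y1) * Y23 * (z3 - z2) - Y12 * (z1 - z2) * Z23 * (y2 - y3))).
  { apply Rmult_le_pos; [repeat apply Rmult_le_pos; lra|].
    assert (Y12 * (y2 - y3) * (Z23 * (z1 - z2)) <= Y23 * (y2 - y1) * (Z12 * (z3 - z2)))
      by (apply Rmult_le_compat; lra).
    lra. }
  unfold Y12, Y13, Y23, Z12, Z13, Z23 in *. lra.
Qed.

Lemma mixed_case :
  slices_agree (swap_xy (mix3 c1 c2 c3)) \/ slices_agree (swap_xz (mix3 c1 c2 c3)).
Proof.
  pose proof H1 as (_ & _ & Hy1 & Hz1). pose proof H2 as (_ & _ & Hy2 & Hz2).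
  destruct (Req_dec (cy c1) (cy c2)) as [Heq | Hneq].
  - right.
    assert (HDz : forall l, Dz l = 0).
    { intro l. unfold Dz. rewrite swap_xz_mix3, det2_mix3. unfold pair_x, dyz; simpl.
      replace (cy c2) with (cy c1) by lra. replace (cy c3) with (cy c1) by lra. ring. }
    change (0 <= Dz false * Dz true). rewrite !HDz. lra.
  - assert (Hdich : forall j l, Dy j < 0 -> 0 <= Dz l).
    { intros j l HDy. pose proof (mixed_certificate j l) as Hcert.
      pose proof (homog_pos _ l Hz1). pose proof (homog_pos _ l Hz2).
      pose proof (homog_pos _ j Hy1). pose proof (homog_pos _ j Hy2).
      assert (Halpha : 0 < homog (cz c1) l * homog (cz c2) l * (cy c2 - cy c1))
        by (repeat apply Rmult_lt_0_compat; lra).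
      assert (Hbeta : 0 <= homog (cy c1) j * homog (cy c2) j * (cz c1 - cz c2))
        by (repeat apply Rmult_le_pos; lra).
      destruct (Rle_dec 0 (Dz l)); [assumption | exfalso; nra]. }
    destruct (Rle_dec 0 (Dy false)), (Rle_dec 0 (Dy true)).
    + left. apply slices_agree_of_nonneg. intros []; assumption.
    + right. apply slices_agree_of_nonneg. intro l. apply (Hdich true). lra.
    + right. apply slices_agree_of_nonneg. intro l. apply (Hdich false). lra.
    + right. apply slices_agree_of_nonneg. intro l. apply (Hdich false). lra.
Qed.
End Mixed.

Ltac solve_uniform :=
  apply slices_agree_mix3;
  solve [ assumption | unfold positive_summand in *; simpl; tauto | unfold dyz; simpl; nra ].

Lemma some_axis_mix3_canonical (c1 c2 c3 : summand) :
  positive_summand c1 -> positive_summand c2 -> positive_summand c3 ->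
  cx c1 <= cx c2 <= cx c3 -> cy c1 <= cy c3 -> cz c1 <= cz c3 ->
  slices_agree_some_axis (mix3 c1 c2 c3).
Proof.
  intros H1 H2 H3 Hx Hy Hz.
  assert (Hy2 : cy c2 <= cy c1 \/ cy c1 <= cy c2 <= cy c3 \/ cy c3 <= cy c2)
    by (destruct (Rle_dec (cy c2) (cy c1)), (Rle_dec (cy c2) (cy c3)); lra).
  assert (Hz2 : cz c2 <= cz c1 \/ cz c1 <= cz c2 <= cz c3 \/ cz c3 <= cz c2)
    by (destruct (Rle_dec (cz c2) (cz c1)), (Rle_dec (cz c2) (cz c3)); lra).
  destruct Hy2 as [Ylow | [Ymid | Yhigh]].
  2: { right; right. rewrite swap_xz_mix3. solve_uniform. }
  all: destruct Hz2 as [Zlow | [Zmid | Zhigh]].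
  2, 5: right; left; rewrite swap_xy_mix3; solve_uniform.
  1, 4: left; solve_uniform.
  - apply some_axis_of_swap_yz. rewrite swap_yz_mix3. right. apply mixed_case;
      solve [unfold positive_summand in *; simpl; tauto | simpl; lra].
  - right. apply mixed_case; auto; lra.
Qed.

Lemma some_axis_mix3_y_ordered (c1 c2 c3 : summand) :
  positive_summand c1 -> positive_summand c2 -> positive_summand c3 ->
  cx c1 <= cx c2 <= cx c3 -> cy c1 <= cy c3 -> slices_agree_some_axis (mix3 c1 c2 c3).
Proof.
  intros H1 H2 H3 Hx Hy.
  destruct (Rle_dec (cz c1) (cz c3)) as [Hz | Hz]; [apply some_axis_mix3_canonical; auto|].
  pose proof H1 as (_ & _ & _ & Hz1). pose proof H2 as (_ & _ & _ & Hz2).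
  pose proof H3 as (_ & _ & _ & Hz3).
  rewrite <- flip_z_mix3 by lra. apply some_axis_flip_z.
  apply some_axis_mix3_canonical; try apply positive_summand_flip_z; auto; simpl.
  apply Rinv_le_contravar; lra.
Qed.

Lemma some_axis_mix3_x_sorted (c1 c2 c3 : summand) :
  positive_summand c1 -> positive_summand c2 -> positive_summand c3 ->
  cx c1 <= cx c2 <= cx c3 -> slices_agree_some_axis (mix3 c1 c2 c3).
Proof.
  intros H1 H2 H3 Hx.
  destruct (Rle_dec (cy c1) (cy c3)) as [Hy | Hy]; [apply some_axis_mix3_y_ordered; auto|].
  pose proof H1 as (_ & _ & Hy1 & _). pose proof H2 as (_ & _ & Hy2 & _).
  pose proof H3 as (_ & _ & Hy3 & _).
  rewrite <- flip_y_mix3 by lra. apply some_axis_flip_y.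
  apply some_axis_mix3_y_ordered; try apply positive_summand_flip_y; auto; simpl.
  apply Rinv_le_contravar; lra.
Qed.

Lemma mix3_swap12 (c1 c2 c3 : summand) : mix3 c1 c2 c3 = mix3 c2 c1 c3.
Proof. tensor_ext. unfold mix3, tadd. ring. Qed.

Lemma mix3_swap23 (c1 c2 c3 : summand) : mix3 c1 c2 c3 = mix3 c1 c3 c2.
Proof. tensor_ext. unfold mix3, tadd. ring. Qed.

Lemma some_axis_mix3 (c1 c2 c3 : summand) :
  positive_summand c1 -> positive_summand c2 -> positive_summand c3 ->
  slices_agree_some_axis (mix3 c1 c2 c3).
Proof.
  intros H1 H2 H3.
  destruct (Rle_dec (cx c1) (cx c2)), (Rle_dec (cx c2) (cx c3)), (Rle_dec (cx c1) (cx c3)).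
  all: first
    [ apply some_axis_mix3_x_sorted; auto; lra
    | rewrite mix3_swap23; apply some_axis_mix3_x_sorted; auto; lra
    | rewrite mix3_swap12; apply some_axis_mix3_x_sorted; auto; lra
    | rewrite mix3_swap12, mix3_swap23; apply some_axis_mix3_x_sorted; auto; lra
    | rewrite mix3_swap23, mix3_swap12; apply some_axis_mix3_x_sorted; auto; lra
    | rewrite mix3_swap12, mix3_swap23, mix3_swap12; apply some_axis_mix3_x_sorted; auto; lra ].
Qed.

Lemma term_of_positive_rank1 (r : tensor) :
  positive_rank1 r -> exists c, positive_summand c /\ r = term c.
Proof.
  intros (a & b & c & Ha & Hb & Hc & ->).
  pose proof (Ha false). pose proof (Ha true). pose proof (Hb false). pose proof (Hb true).
  pose proof (Hc false). pose proof (Hc true).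
  exists (Summand (a false * b false * c false) (a true / a false) (b true / b false)
            (c true / c false)).
  split.
  - unfold positive_summand; simpl. repeat split; try apply Rdiv_lt_0_compat; auto.
    repeat apply Rmult_le_pos; lra.
  - tensor_ext. unfold term, outer3, homog; simpl. destruct i, j, l; field; lra.
Qed.

Definition positive_mix3 (q : tensor) : Prop :=
  exists c1 c2 c3, positive_summand c1 /\ positive_summand c2 /\ positive_summand c3 /\
    q = mix3 c1 c2 c3.

Lemma mix3_nonneg (c1 c2 c3 : summand) :
  positive_summand c1 -> positive_summand c2 -> positive_summand c3 -> tnonneg (mix3 c1 c2 c3).
Proof.
  intros (Hw1 & Hx1 & Hy1 & Hz1) (Hw2 & Hx2 & Hy2 & Hz2) (Hw3 & Hx3 & Hy3 & Hz3) i j l.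
  unfold mix3, tadd, term, outer3.
  repeat apply Rplus_le_le_0_compat; repeat apply Rmult_le_pos; auto; left; apply homog_pos; auto.
Qed.

Lemma positive_mix3_in_closure_RBM (q : tensor) : positive_mix3 q -> in_closure RBM q.
Proof.
  intros (c1 & c2 & c3 & H1 & H2 & H3 & ->).
  apply some_axis_in_closure_RBM; [apply mix3_nonneg | apply some_axis_mix3]; auto.
Qed.

Lemma nonneg_mixture_in_closure (a1 b1 c1 a2 b2 c2 a3 b3 c3 : vec2) :
  nonneg2 a1 -> nonneg2 b1 -> nonneg2 c1 -> nonneg2 a2 -> nonneg2 b2 -> nonneg2 c2 ->
  nonneg2 a3 -> nonneg2 b3 -> nonneg2 c3 ->
  in_closure positive_mix3 (tadd (tadd (outer3 a1 b1 c1) (outer3 a2 b2 c2)) (outer3 a3 b3 c3)).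
Proof.
  intros.
  apply in_closure_mono with (sumset (sumset positive_rank1 positive_rank1) positive_rank1).
  - intros q (q12 & r3 & (r1 & r2 & Hr1 & Hr2 & ->) & Hr3 & ->).
    destruct (term_of_positive_rank1 r1 Hr1) as (t1 & Ht1 & ->).
    destruct (term_of_positive_rank1 r2 Hr2) as (t2 & Ht2 & ->).
    destruct (term_of_positive_rank1 r3 Hr3) as (t3 & Ht3 & ->).
    exists t1, t2, t3. auto 6.
  - repeat apply in_closure_tadd; apply rank1_in_closure; auto.
Qed.

Definition tsum (P : tensor) : R := sumb (fun i => sumb (fun j => sumb (fun k => P i j k))).

Lemma tsum_le (P Q : tensor) : (forall i j k, P i j k <= Q i j k) -> tsum P <= tsum Q.
Proof. intros H. unfold tsum, sumb. repeat apply Rplus_le_compat; apply H. Qed.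

Lemma tsum_shift (P : tensor) (d : R) : tsum (fun i j k => P i j k + d) = tsum P + 8 * d.
Proof. unfold tsum, sumb. ring. Qed.

Lemma tsum_scale (P : tensor) (t : R) : tsum (fun i j k => t * P i j k) = t * tsum P.
Proof. unfold tsum, sumb. ring. Qed.

Lemma simplex_entry_le_1 (p : tensor) (i j k : bool) : in_simplex p -> p i j k <= 1.
Proof.
  intros [Hn Hs]. unfold sumb in Hs.
  pose proof (Hn false false false). pose proof (Hn false false true).
  pose proof (Hn false true false). pose proof (Hn false true true).
  pose proof (Hn true false false). pose proof (Hn true false true).
  pose proof (Hn true true false). pose proof (Hn true true true).
  destruct i, j, k; lra.
Qed.

Lemma RBM_nonneg (r : tensor) : RBM r -> tnonneg r.
Proof.
  intros (a1 & b1 & c1 & d1 & e1 & f1 & a2 & b2 & c2 & d2 & e2 & f2 & H1 & H2 & H3 & H4 & H5 & H6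
          & H7 & H8 & H9 & H10 & H11 & H12 & ->) i j l.
  unfold hadamard, tadd, outer3.
  apply Rmult_le_pos; apply Rplus_le_le_0_compat; repeat apply Rmult_le_pos; auto.
Qed.

Lemma RBM_scale (r : tensor) (t : R) : 0 <= t -> RBM r -> RBM (fun i j k => t * r i j k).
Proof.
  intros Ht (a1 & b1 & c1 & d1 & e1 & f1 & a2 & b2 & c2 & d2 & e2 & f2 & H1 & H2 & H3 & H4 & H5
             & H6 & H7 & H8 & H9 & H10 & H11 & H12 & ->).
  exists (fun i => t * a1 i), b1, c1, (fun i => t * d1 i), e1, f1, a2, b2, c2, d2, e2, f2.
  repeat split; auto; try (intro i; apply Rmult_le_pos; auto).
  tensor_ext. unfold hadamard, tadd, outer3. ring.
Qed.

Lemma normalize_error (y x s d eps : R) :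
  0 <= y <= 1 -> 0 <= x -> Rabs (y - x) < d -> 1 - 8 * d <= s <= 1 + 8 * d -> d <= 1 / 16 ->
  40 * d <= eps -> Rabs (y - / s * x) < eps.
Proof.
  intros Hy Hx Hyx Hs Hd Heps.
  apply Rabs_def2 in Hyx as [Hyx1 Hyx2].
  assert (Hspos : 0 < s) by lra.
  assert (Ht : 0 < / s <= 2).
  { split; [apply Rinv_0_lt_compat; lra|].
    replace 2 with (/ (1 / 2)) by field. apply Rinv_le_contravar; lra. }
  assert (E : y - / s * x = (y - x) + / s * x * (s - 1)) by (field; lra).
  assert (Hq : 0 <= / s * x <= 2 * (1 + d)) by (split; nra).
  rewrite E. apply Rabs_def1; nra.
Qed.

Lemma in_closure_RBM32 (p : tensor) : in_simplex p -> in_closure RBM p -> in_closure RBM32 p.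
Proof.
  intros Hp Hcl eps Heps.
  set (d := Rmin (1 / 16) (eps / 40)).
  assert (Hd : 0 < d /\ d <= 1 / 16 /\ 40 * d <= eps).
  { split; [apply Rmin_glb_lt; lra|]. split; [apply Rmin_l|].
    pose proof (Rmin_r (1 / 16) (eps / 40)) as Hmin. fold d in Hmin. lra. }
  destruct (Hcl d) as (r & Hr & Hpr); [lra|].
  assert (Hpr' : forall i j k, p i j k - d <= r i j k <= p i j k + d)
    by (intros i j k; destruct (Rabs_def2 _ _ (Hpr i j k)); lra).
  set (s := tsum r).
  assert (Hs : 1 - 8 * d <= s <= 1 + 8 * d).
  { destruct Hp as [_ Hp1]. change (tsum p = 1) in Hp1.
    pose proof (tsum_le (fun i j k => p i j k + - d) r (fun i j k => proj1 (Hpr' i j k))) as Hlo.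
    pose proof (tsum_le r (fun i j k => p i j k + d) (fun i j k => proj2 (Hpr' i j k))) as Hhi.
    rewrite tsum_shift in Hlo, Hhi. fold s in Hlo, Hhi. lra. }
  exists (fun i j k => / s * r i j k). split; [split; [split|] |].
  - intros i j k. apply Rmult_le_pos; [left; apply Rinv_0_lt_compat; lra | apply RBM_nonneg, Hr].
  - change (tsum (fun i j k => / s * r i j k) = 1). rewrite tsum_scale. fold s. field. lra.
  - apply RBM_scale; [left; apply Rinv_0_lt_compat; lra | exact Hr].
  - intros i j k. apply normalize_error with d; try lra.
    + split; [apply (proj1 Hp) | apply simplex_entry_le_1, Hp].
    + apply RBM_nonneg, Hr.
    + apply Hpr.
Qed.

Theorem mainTheorem5 : forall p : tensor, M33 p -> in_closure RBM32 p.
Proof.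
  intros p [Hp (a1 & b1 & c1 & a2 & b2 & c2 & a3 & b3 & c3 & Ha1 & Hb1 & Hc1 & Ha2 & Hb2 & Hc2
                & Ha3 & Hb3 & Hc3 & Hmix)].
  apply in_closure_RBM32; [exact Hp|].
  apply in_closure_trans with positive_mix3; [exact positive_mix3_in_closure_RBM|].
  rewrite Hmix. apply nonneg_mixture_in_closure; assumption.
Qed.
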